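(* Let $\beta\in(0,1)$, let $G=(V,E)$ be an $n$-vertex graph, let $P_1\subseteq[\lfloor\beta n\rfloor]$ with $|P_1|=l\ge 1$ and $t_1:=\max P_1$, let $p_1<p_2$ be positions in $[\lfloor\beta n\rfloor]\setminus P_1$ with $t_1<p_1$, and let $S\subseteq[\lfloor\beta n\rfloor]\setminus(P_1\cup\{p_2\})$ with $p_1\in S$. Let $\pi$ be a uniformly random bijection $[n]\to V$ and $\sigma\colon S\to V$ any injective map. Then the conditional probability, given $\pi|_S=\sigma$, that $\pi(p_1)$ and $\pi(p_2)$ are adjacent and both alive in step $t_1+1$ is at most $\frac{1}{e\cdot l\cdot(1-\beta)}$.
   Context: Given a bijection $\pi\colon[n]\to V$, the sequential greedy algorithm processes steps $t=1,\dots,n$: initially all vertices are alive; in step $t$, if $\pi(t)$ is alive, it is added to the independent set and $\pi(t)$ together with all its neighbors become dead for all later steps; if $\pi(t)$ is dead, nothing happens. A vertex is alive in step $t$ if it has not become dead in any step $t'<t$. *)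

From mathcomp Require Import all_boot.
From Stdlib Require Import Reals.
Set Implicit Arguments. Unset Strict Implicit. Unset Printing Implicit Defensive.

Definition floorn (b : R) (n : nat) : nat := Z.to_nat (Int_part (b * INR n)).

(* Sequential greedy: given the sequence of vertices processed in order,
   return the set of dead vertices after processing all of them. *)
Fixpoint greedy_dead (V : finType) (e : rel V) (D : {set V}) (s : seq V)
  : {set V} :=
  match s with
  | [::] => D
  | u :: s' => greedy_dead e (if u \in D then D else D :|: (u |: [set w | e u w])) s'
  end.

(* Positions are 0-based: ordinal i : 'I_n stands for position/step i+1 of the
   paper.  [order f] is the list pi(1), ..., pi(n). *)
Definition order (V : finType) n (f : {ffun 'I_n -> V}) : seq V :=
  [seq f i | i <- enum 'I_n].

(* v is alive at (1-based) step k+1, i.e. not killed in the first k steps. *)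
Definition alive_at (V : finType) (e : rel V) n (f : {ffun 'I_n -> V}) (k : nat)
  (v : V) : bool :=
  v \notin greedy_dead e set0 (take k (order f)).

Definition cond_set (V : finType) n (S : {set 'I_n}) (sigma : 'I_n -> V)
  : {set {ffun 'I_n -> V}} :=
  [set f : {ffun 'I_n -> V} | injectiveb f & [forall i in S, f i == sigma i]].

(* the event: pi(p1), pi(p2) adjacent and both alive in (1-based) step t1+1,
   where t1 : 'I_n is 0-based, so the first (t1+1) steps have been processed *)
Definition event (V : finType) (e : rel V) n (t1 p1 p2 : 'I_n)
  (f : {ffun 'I_n -> V}) : bool :=
  [&& e (f p1) (f p2), alive_at e f (val t1).+1 (f p1) & alive_at e f (val t1).+1 (f p2)].

From Pilot Require Import Defs.
From mathcomp Require Import all_boot.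
From Stdlib Require Import Reals.
From mathcomp Require Import perm.
From Stdlib Require Import Lra ZArith.
Set Implicit Arguments. Unset Strict Implicit. Unset Printing Implicit Defensive.

(* Reveal pi one position at a time, always conditioning on pi|_S = sigma, and write
   u = sigma(p1).  The event needs pi(p2) to be an unused live neighbour of u at step
   t1+1; call the current set of such vertices the candidates X.  Since pi(p2) is
   uniform over the at least n - floor(beta n) vertices not yet used, the event has
   conditional probability at most |X| / (n - floor(beta n)) once t1+1 steps are
   revealed.  At each of the l steps in P1 the revealed vertex is uniform over the
   unused vertices; if it is a candidate it kills u, and X never grows.  Hence the
   probability is at most max_(y <= n) y / (n - floor(beta n)) * (1 - y/n)^l, which
   is at most 1/(e l (1 - beta)) by (1 - z)^l <= exp(-z l) and w exp(-w) <= 1/e. *)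

Open Scope R_scope.

Lemma pow_exp a (l : nat) : exp a ^ l = exp (a * INR l).
Proof.
elim: l => [|l IH]; first by rewrite /= Rmult_0_r exp_0.
by rewrite [_ ^ _.+1]/= IH -exp_plus S_INR; congr exp; ring.
Qed.

Lemma mul_exp_opp_le w : w * exp (- w) <= exp (-1).
Proof.
apply: Rle_trans (_ : exp (w - 1) * exp (- w) <= _).
  apply: Rmult_le_compat_r; first exact: Rlt_le (exp_pos _).
  have := exp_ineq1_le (w - 1); lra.
by rewrite -exp_plus; apply: Req_le; congr exp; ring.
Qed.

Lemma ratio_le_inv_e (n A beta y : R) (l : nat) :
  0 < n -> 0 < beta < 1 -> n * (1 - beta) <= A -> 0 <= y <= n -> (1 <= l)%nat ->
  y / A * (1 - y / n) ^ l <= / (exp 1 * INR l * (1 - beta)).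
Proof.
move=> n_gt0 beta01 nA y0n l_ge1.
have l_ge1R : 1 <= INR l by apply: (le_INR 1); apply/leP.
have A_gt0 : 0 < A by nra.
set z := y / n; set q := n / A.
have yzq : y / A = z * q by rewrite /z /q; field; lra.
have z01 : 0 <= z <= 1.
  have : z * n = y by rewrite /z; field; lra.
  by split; nra.
have q_ge0 : 0 <= q by rewrite /q; apply: Rlt_le; apply: Rdiv_lt_0_compat.
have q_le : q * (1 - beta) <= 1.
  have : q * A = n by rewrite /q; field; lra.
  nra.
have decay : (1 - z) ^ l <= exp (- (z * INR l)).
  rewrite Ropp_mult_distr_l -pow_exp; apply: pow_incr.
  by have := exp_ineq1_le (- z); lra.
have peak := mul_exp_opp_le (z * INR l).
set E := exp (- (z * INR l)) in decay peak *.
have E_gt0 : 0 < E by apply: exp_pos.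
have e_gt0 := exp_pos 1.
have e_inv : exp (-1) * exp 1 = 1 by rewrite -exp_plus Rplus_opp_l exp_0.
rewrite yzq; apply: Rle_trans (_ : z * q * E <= _).
  by apply: Rmult_le_compat_l => //; apply: Rmult_le_pos; lra.
have den_gt0 : 0 < exp 1 * INR l * (1 - beta).
  by repeat apply: Rmult_lt_0_compat; lra.
apply: (Rmult_le_reg_r _ _ _ den_gt0); rewrite Rinv_l; last lra.
have -> : z * q * E * (exp 1 * INR l * (1 - beta))
          = (z * INR l * E) * (q * (1 - beta)) * exp 1 by ring.
apply: Rle_trans (_ : exp (-1) * 1 * exp 1 <= _); last lra.
apply: Rmult_le_compat_r; first lra.
by apply: Rmult_le_compat => //; apply: Rmult_le_pos; nra.
Qed.

Lemma floorn_le (beta : R) (n : nat) : 0 <= beta -> INR (floorn beta n) <= beta * INR n.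
Proof.
move=> beta_ge0; rewrite /floorn.
have [floor_le _] := base_Int_part (beta * INR n).
have := pos_INR n.
case: (Int_part (beta * INR n)) floor_le => [|p|p] floor_le n_ge0.
- by rewrite /=; nra.
- by rewrite INR_IZR_INZ Z2Nat.id //; apply: Pos2Z.is_nonneg.
- by rewrite Z2Nat.inj_neg /=; nra.
Qed.

Lemma floorn_lt (beta : R) (n : nat) :
  0 <= beta < 1 -> (0 < n)%nat -> (floorn beta n < n)%nat.
Proof.
move=> [beta_ge0 beta_lt1] n_gt0; have fl_R := floorn_le n beta_ge0.
have n_pos : 0 < INR n by apply/lt_0_INR/ltP.
by apply/ltP/INR_lt; nra.
Qed.

Lemma INR_sum_le_scale (I : Type) (r : seq I) (P : pred I) (a b : I -> nat) (K : R) :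
  (forall i, P i -> INR (a i) <= K * INR (b i)) ->
  INR (\sum_(i <- r | P i) a i) <= K * INR (\sum_(i <- r | P i) b i).
Proof.
move=> ab; elim: r => [|x r IH]; first by rewrite !big_nil /=; lra.
rewrite !big_cons; case: ifP => // Px.
by rewrite !plus_INR Rmult_plus_distr_l; apply: Rplus_le_compat => //; apply: ab.
Qed.

Close Scope R_scope.

Lemma greedy_dead_rcons (V : finType) (e : rel V) (D : {set V}) (s : seq V) (w : V) :
  greedy_dead e D (rcons s w)
  = let D' := greedy_dead e D s in if w \in D' then D' else D' :|: (w |: [set z | e w z]).
Proof. by elim: s D => [|x s IH] D //=. Qed.

Lemma greedy_dead_rcons_sub (V : finType) (e : rel V) (D : {set V}) (s : seq V) (w : V) :
  greedy_dead e D s \subset greedy_dead e D (rcons s w).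
Proof. by rewrite greedy_dead_rcons /=; case: ifP => _; rewrite ?subsetUl. Qed.

Section Enumeration.

Variables (V : finType) (n : nat).
Implicit Type f : {ffun 'I_n -> V}.

Lemma size_order f : size (Defs.order f) = n.
Proof. by rewrite size_map size_enum_ord. Qed.

Lemma nth_order f (i : 'I_n) x0 : nth x0 (Defs.order f) i = f i.
Proof. by rewrite (nth_map i) ?size_enum_ord // nth_ord_enum. Qed.

Lemma take_order_ord f (i : 'I_n) : take i.+1 (Defs.order f) = rcons (take i (Defs.order f)) (f i).
Proof. by rewrite (take_nth (f i)) ?size_order // nth_order. Qed.

Lemma mem_take_order f k w :
  w \in take k (Defs.order f) -> exists2 j : 'I_n, val j < k & f j = w.
Proof.
rewrite /Defs.order -map_take => /mapP [j j_in ->]; exists j => //.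
by move: j_in; rewrite in_take ?mem_enum // index_enum_ord.
Qed.

Lemma injective_notin_take f k (j : 'I_n) :
  injective f -> k <= j -> f j \notin take k (Defs.order f).
Proof.
move=> f_inj kj; apply/negP => /mem_take_order [j' j'k /f_inj eq_j'].
by rewrite eq_j' ltnNge kj in j'k.
Qed.

End Enumeration.

Lemma card_fibres (D V : finType) (B : {set D}) (g : D -> V) (W : {set V}) :
  #|[set x in B | g x \in W]| = \sum_(w in W) #|[set x in B | g x == w]|.
Proof.
rewrite -[LHS]sum1_card (partition_big g (mem W)) /= => [|x]; last first.
  by rewrite inE => /andP [].
apply: eq_bigr => w w_in; rewrite -sum1_card; apply: eq_bigl => x; rewrite !inE.
by case: eqP => [->|]; rewrite ?w_in ?andbT ?andbF.
Qed.

Lemma card_fibresT (D V : finType) (B : {set D}) (g : D -> V) :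
  #|B| = \sum_w #|[set x in B | g x == w]|.
Proof.
transitivity #|[set x in B | g x \in [set: V]]|.
  by apply: eq_card => x; rewrite !inE andbT.
by rewrite card_fibres; apply: eq_bigl => w; rewrite inE.
Qed.

Section Prefixes.

Variables (V : finType) (n : nat) (S : {set 'I_n}) (sigma : 'I_n -> V).
Implicit Types (f : {ffun 'I_n -> V}) (s : seq V).

Definition prefix_class s :=
  [set f in cond_set S sigma | take (size s) (Defs.order f) == s].

Definition fresh s := [set w | (w \notin s) && (w \notin sigma @: S)].

Lemma cond_setP f :
  f \in cond_set S sigma -> injective f /\ {in S, forall i, f i = sigma i}.
Proof.
rewrite inE => /andP [/injectiveP f_inj /forallP f_S]; split => // i i_S.
exact/eqP/(implyP (f_S i)).
Qed.

Lemma prefix_class_cond s f : f \in prefix_class s -> f \in cond_set S sigma.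
Proof. by rewrite inE => /andP []. Qed.

Lemma prefix_class_nil : prefix_class [::] = cond_set S sigma.
Proof. by apply/setP => f; rewrite inE take0 eqxx andbT. Qed.

Lemma prefix_class_rcons s w (i : 'I_n) : val i = size s ->
  prefix_class (rcons s w) = [set f in prefix_class s | f i == w].
Proof.
move=> i_s; apply/setP => f.
by rewrite !inE size_rcons -i_s take_order_ord eqseq_rcons andbA.
Qed.

Lemma prefix_class_fresh s f (j : 'I_n) :
  size s <= j -> j \notin S -> f \in prefix_class s -> f j \in fresh s.
Proof.
move=> s_j j_S; rewrite inE => /andP [/cond_setP [f_inj f_S] /eqP f_s].
rewrite inE -{1}f_s injective_notin_take //=.
apply/imsetP => -[i i_S]; rewrite -f_S // => /f_inj eq_ji.
by rewrite eq_ji i_S in j_S.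
Qed.

Lemma card_value_le s (j : 'I_n) v v' : v \in fresh s -> v' \in fresh s ->
  #|[set f in prefix_class s | f j == v]| <= #|[set f in prefix_class s | f j == v']|.
Proof.
rewrite !inE => /andP [v_s v_S] /andP [v'_s v'_S].
pose swap f : {ffun 'I_n -> V} := [ffun i => tperm v v' (f i)].
have swapK : involutive swap by move=> f; apply/ffunP => i; rewrite !ffunE tpermK.
rewrite -(card_imset _ (inv_inj swapK)); apply: subset_leq_card.
apply/subsetP => _ /imsetP [f + ->]; rewrite inE => /andP [+ /eqP f_j].
rewrite inE => /andP [f_cond f_s].
have [f_inj f_S] := cond_setP f_cond.
have swap_out x : x \in s \/ x \in sigma @: S -> tperm v v' x = x.
  by move=> x_in; apply: tpermD; apply/eqP => eq_x; case: x_in; rewrite -eq_x; apply/negP.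
rewrite inE ffunE f_j tpermL eqxx andbT !inE -andbA; apply/and3P; split.
- by apply/injectiveP => a b; rewrite !ffunE => /perm_inj /f_inj.
- apply/forallP => i; apply/implyP => i_S.
  by rewrite ffunE f_S // swap_out //; right; apply: imset_f.
- have -> : Defs.order (swap f) = map (tperm v v') (Defs.order f).
    by rewrite /Defs.order -map_comp; apply: eq_map => i /=; rewrite ffunE.
  by rewrite -map_take (eqP f_s) map_id_in // => x x_s; apply: swap_out; left.
Qed.

Lemma card_value_stale s (j : 'I_n) w : size s <= j -> j \notin S -> w \notin fresh s ->
  #|[set f in prefix_class s | f j == w]| = 0.
Proof.
move=> s_j j_S w_stale; apply: eq_card0 => f; rewrite inE.
by apply: contraNF w_stale => /andP [/(prefix_class_fresh s_j j_S) + /eqP <-].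
Qed.

Lemma card_value_in_fresh s (j : 'I_n) (W : {set V}) :
  size s <= j -> j \notin S -> W \subset fresh s ->
  #|fresh s| * #|[set f in prefix_class s | f j \in W]| = #|W| * #|prefix_class s|.
Proof.
move=> s_j j_S W_fresh.
have [fresh0|[v0 v0_fresh]] := set_0Vmem (fresh s).
  by move: W_fresh; rewrite fresh0 subset0 => /eqP ->; rewrite cards0.
set c := #|[set f in prefix_class s | f j == v0]|.
have fibre_c w : w \in fresh s -> #|[set f in prefix_class s | f j == w]| = c.
  by move=> w_fresh; apply/eqP; rewrite eqn_leq !card_value_le.
have -> : #|[set f in prefix_class s | f j \in W]| = #|W| * c.
  rewrite card_fibres -sum_nat_const; apply: eq_bigr => w /(subsetP W_fresh).
  exact: fibre_c.
have -> : #|prefix_class s| = #|fresh s| * c.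
  rewrite (card_fibresT _ (fun f => f j)) (bigID (mem (fresh s))) /= -sum_nat_const.
  rewrite [X in _ + X]big1 => [|w]; last exact: card_value_stale.
  by rewrite addn0; apply: eq_bigr => w; apply: fibre_c.
by rewrite mulnCA.
Qed.

End Prefixes.

Lemma card_ord_geq n m : m <= n -> #|[set j : 'I_n | m <= j]| = n - m.
Proof.
move=> mn.
have low : #|[set j : 'I_n | j < m]| = m.
  have widen_inj : injective (widen_ord mn) by move=> a b /(congr1 val) /= /val_inj.
  rewrite -[RHS]card_ord -(card_imset _ widen_inj); apply: eq_card => j.
  rewrite inE; apply/idP/imsetP => [jm | [k _ ->]]; last exact: (ltn_ord k).
  by exists (Ordinal jm) => //; apply: val_inj.
have := cardsC [set j : 'I_n | j < m]; rewrite card_ord low => sum_n.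
by rewrite -[in RHS]sum_n addKn; apply: eq_card => j; rewrite !inE leqNgt.
Qed.

Section Invariant.

Variables (V : finType) (e : rel V) (n : nat) (S P1 : {set 'I_n}) (sigma : 'I_n -> V).
Variables (t1 p1 p2 : 'I_n) (fl : nat).
Hypotheses (e_sym : symmetric e) (card_V : #|V| = n) (fl_lt_n : fl < n).
Hypotheses (P1_notin_S : forall j, j \in P1 -> j \notin S) (p1_in_S : p1 \in S)
  (p2_notin_S : p2 \notin S) (S_lt_fl : forall j, j \in S -> val j < fl).
Hypotheses (P1_le_t1 : forall j, j \in P1 -> val j <= val t1)
  (t1_lt_p2 : val t1 < val p2) (p2_lt_fl : val p2 < fl).

Local Notation dead s := (greedy_dead e set0 s).
Local Notation prefix_class := (prefix_class S sigma).
Local Notation fresh := (fresh S sigma).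
Implicit Types (f : {ffun 'I_n -> V}) (s : seq V).

Definition candidates s : {set V} :=
  if sigma p1 \in dead s then set0
  else [set w in fresh s | e (sigma p1) w && (w \notin dead s)].

Definition ext_count s := #|prefix_class s|.

Definition event_count s := #|[set f in prefix_class s | event e t1 p1 p2 f]|.

Definition P1_from k := #|[set j in P1 | k <= val j]|.

Definition gap := n - fl.

Definition ratio (r y : nat) : R := (INR y / INR gap * (1 - INR y / INR n) ^ r)%R.

Fixpoint ratio_max (r x : nat) : R :=
  if x is x'.+1 then Rmax (ratio_max r x') (ratio r x) else ratio r 0.

Lemma n_gt0 : (0 < INR n)%R.
Proof. by apply: lt_0_INR; apply/ltP; apply: leq_ltn_trans fl_lt_n. Qed.

Lemma gap_gt0 : (0 < INR gap)%R.
Proof. by apply: lt_0_INR; apply/ltP; rewrite subn_gt0. Qed.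

Lemma ratio_max_ge r x y : y <= x -> (ratio r y <= ratio_max r x)%R.
Proof.
elim: x => [|x IH] /=; first by rewrite leqn0 => /eqP ->; lra.
rewrite leq_eqVlt => /orP [/eqP ->|/IH y_le]; first exact: Rmax_r.
exact: Rle_trans y_le (Rmax_l _ _).
Qed.

Lemma ratio_max_attained r x : exists2 y, y <= x & ratio_max r x = ratio r y.
Proof.
elim: x => [|x [y y_le max_y]] /=; first by exists 0.
by rewrite max_y /Rmax; case: Rle_dec => _; [exists x.+1 | exists y => //; apply: leqW].
Qed.

Lemma ratio_max_mono r x x' : x <= x' -> (ratio_max r x <= ratio_max r x')%R.
Proof.
move=> xx'; have [y y_le ->] := ratio_max_attained r x.
by apply: ratio_max_ge; apply: leq_trans xx'.
Qed.

Lemma ratio_max0 r : ratio_max r 0 = 0%R.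
Proof. by rewrite /= /ratio Rdiv_0_l Rmult_0_l. Qed.

Lemma ratio_max_ge0 r x : (0 <= ratio_max r x)%R.
Proof. by rewrite -(ratio_max0 r); apply: ratio_max_mono. Qed.

Lemma ratio_max_succ r x : x <= n ->
  ((1 - INR x / INR n) * ratio_max r x <= ratio_max r.+1 x)%R.
Proof.
move=> xn; have [y yx ->] := ratio_max_attained r x.
apply: Rle_trans (ratio_max_ge r.+1 yx).
have n_pos := n_gt0; have gap_pos := gap_gt0.
have y_frac : (INR y / INR n <= INR x / INR n <= 1)%R.
  have yx_R : (INR y <= INR x)%R by apply/le_INR/leP.
  have xn_R : (INR x <= INR n)%R by apply/le_INR/leP.
  have := Rinv_0_lt_compat _ n_pos; have := Rinv_r (INR n); rewrite /Rdiv; nra.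
have ratio_ge0 : (0 <= ratio r y)%R.
  apply: Rmult_le_pos; last by apply: pow_le; lra.
  by apply: Rmult_le_pos; [apply: pos_INR | apply/Rlt_le/Rinv_0_lt_compat].
have -> : ratio r.+1 y = ((1 - INR y / INR n) * ratio r y)%R by rewrite /ratio /=; ring.
by apply: Rmult_le_compat_r; lra.
Qed.

Lemma ratio_max_le_inv_e (beta : R) l x :
  (0 < beta < 1)%R -> (INR fl <= beta * INR n)%R -> 1 <= l -> x <= n ->
  (ratio_max l x <= / (exp 1 * INR l * (1 - beta)))%R.
Proof.
move=> beta01 fl_R l_ge1 xn; have [y yx ->] := ratio_max_attained l x.
have n_pos := n_gt0.
apply: ratio_le_inv_e => //.
- by rewrite /gap minus_INR; [nra | apply/leP/ltnW].
- by split; [apply: pos_INR | apply/le_INR/leP/(leq_trans yx)].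
Qed.

Lemma P1_from0 : P1_from 0 = #|P1|.
Proof. by apply: eq_card => j; rewrite inE andbT. Qed.

Lemma P1_from_t1 : P1_from t1.+1 = 0.
Proof.
apply: eq_card0 => j; rewrite inE; apply/andP => -[/P1_le_t1 j_t1 t1_j].
by rewrite ltnNge j_t1 in t1_j.
Qed.

Lemma P1_from_ord (i : 'I_n) : P1_from i = (i \in P1) + P1_from i.+1.
Proof.
rewrite /P1_from (cardsD1 i) inE leqnn andbT; congr (_ + _); apply: eq_card => j.
by rewrite !inE ltn_neqAle -val_eqE eq_sym andbCA.
Qed.

Lemma candidates_sub_fresh s : candidates s \subset fresh s.
Proof.
rewrite /candidates; case: ifP => _; first exact: sub0set.
by apply/subsetP => w; rewrite inE => /andP [].
Qed.

Lemma candidates_rcons_sub s w : candidates (rcons s w) \subset candidates s.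
Proof.
have /subsetP dead_sub := greedy_dead_rcons_sub e set0 s w.
rewrite /candidates; case: ifP => [_|u_alive]; first exact: sub0set.
rewrite ifN; last by apply: contraFN u_alive; apply: dead_sub.
apply/subsetP => x; rewrite !inE mem_rcons in_cons !negb_or.
case/andP=> /andP [/andP [_ x_s] x_S] /andP [-> x_alive]; rewrite x_s x_S /=.
by apply: contra x_alive; apply: dead_sub.
Qed.

Lemma candidates_rcons_kill s w : w \in candidates s -> candidates (rcons s w) = set0.
Proof.
rewrite {1}/candidates; case: ifP => _; first by rewrite inE.
rewrite inE => /and3P [_ uw w_alive].
by rewrite /candidates greedy_dead_rcons /= (negbTE w_alive) !inE e_sym uw !orbT.
Qed.

Lemma event_count_le s : event_count s <= ext_count s.
Proof. by apply: subset_leq_card; apply/subsetP => f; rewrite inE => /andP []. Qed.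

Lemma ext_count_in s (i : 'I_n) (W : {set V}) : val i = size s ->
  \sum_(w in W) ext_count (rcons s w) = #|[set f in prefix_class s | f i \in W]|.
Proof.
move=> i_s; rewrite card_fibres; apply: eq_bigr => w _.
by rewrite /ext_count (prefix_class_rcons _ _ _ i_s).
Qed.

Lemma ext_count_rcons s (i : 'I_n) : val i = size s ->
  ext_count s = \sum_w ext_count (rcons s w).
Proof.
move=> i_s; rewrite /ext_count (card_fibresT _ (fun f => f i)).
by apply: eq_bigr => w _; rewrite (prefix_class_rcons _ _ _ i_s).
Qed.

Lemma event_count_rcons s (i : 'I_n) : val i = size s ->
  event_count s = \sum_w event_count (rcons s w).
Proof.
move=> i_s; rewrite /event_count (card_fibresT _ (fun f => f i)).
apply: eq_bigr => w _; rewrite (prefix_class_rcons _ _ _ i_s); apply: eq_card => f.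
by rewrite !inE andbAC.
Qed.

Lemma gap_le_fresh s f : f \in prefix_class s -> size s <= fl -> gap <= #|fresh s|.
Proof.
move=> f_s s_fl; have [f_inj _] := cond_setP (prefix_class_cond f_s).
rewrite /gap -card_ord_geq ?(ltnW fl_lt_n) // -(card_imset _ f_inj).
apply/subset_leq_card/subsetP => _ /imsetP [j + ->]; rewrite inE => fl_j.
apply: prefix_class_fresh (leq_trans s_fl fl_j) _ f_s.
by apply: contraTN fl_j => /S_lt_fl; rewrite -ltnNge.
Qed.

Lemma event_candidates s f : size s = t1.+1 -> f \in prefix_class s ->
  event e t1 p1 p2 f -> f p2 \in candidates s.
Proof.
move=> s_t1 f_s; have [_ f_S] := cond_setP (prefix_class_cond f_s).
have take_s : take (size s) (Defs.order f) = s by move: f_s; rewrite inE => /andP [_ /eqP].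
rewrite /event /alive_at -s_t1 take_s f_S // => /and3P [u_p2 u_alive p2_alive].
rewrite /candidates (negbTE u_alive) inE u_p2 p2_alive !andbT.
by apply: prefix_class_fresh _ p2_notin_S f_s; rewrite s_t1.
Qed.

(* [P1_from (size s)] steps of P1 are still to come after the prefix [s]; the bound uses
   [ratio_max] because [ratio] itself is not monotone in the number of candidates. *)
Definition invariant s := (INR (event_count s)
  <= ratio_max (P1_from (size s)) #|candidates s| * INR (ext_count s))%R.

Lemma invariant_base s : size s = t1.+1 -> invariant s.
Proof.
move=> s_t1; rewrite /invariant s_t1 P1_from_t1.
have [P0|[f f_s]] := set_0Vmem (prefix_class s).
  have := event_count_le s; rewrite /ext_count P0 cards0 leqn0 => /eqP ->.
  by rewrite Rmult_0_r; apply: Rle_refl.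
set X := candidates s; set N := #|[set f in prefix_class s | f p2 \in X]|.
have s_p2 : size s <= p2 by rewrite s_t1.
have uniform := card_value_in_fresh s_p2 p2_notin_S (candidates_sub_fresh s).
have event_N : event_count s <= N.
  apply/subset_leq_card/subsetP => g; rewrite inE => /andP [g_s g_event].
  by rewrite inE g_s (event_candidates s_t1 g_s g_event).
have gap_fresh : gap <= #|fresh s|.
  by apply: gap_le_fresh f_s _; apply/ltnW/(leq_ltn_trans s_p2).
apply: Rle_trans (_ : ratio 0 #|X| * INR (ext_count s) <= _)%R; last first.
  by apply/Rmult_le_compat_r/ratio_max_ge; [apply: pos_INR|].
have gap_pos := gap_gt0.
have [eventR gapR] : (INR (event_count s) <= INR N /\ INR gap <= INR #|fresh s|)%R.
  by split; apply/le_INR/leP.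
move/(congr1 INR): uniform; rewrite !mult_INR /ratio /= Rmult_1_r => uniform.
apply: (Rmult_le_reg_r _ _ _ gap_pos).
have -> : (INR #|X| / INR gap * INR (ext_count s) * INR gap
          = INR #|X| * INR (ext_count s))%R by field; lra.
rewrite -uniform [X in (_ <= X)%R]Rmult_comm.
by apply: Rmult_le_compat => //; apply: pos_INR.
Qed.

Lemma invariant_rcons_free s (i : 'I_n) : val i = size s -> i \notin P1 ->
  (forall w, invariant (rcons s w)) -> invariant s.
Proof.
move=> i_s i_P1 inv_rcons; rewrite /invariant -i_s P1_from_ord (negbTE i_P1) add0n.
rewrite (event_count_rcons i_s) (ext_count_rcons i_s); apply: INR_sum_le_scale => w _.
apply: Rle_trans (inv_rcons w) _; rewrite size_rcons -i_s.
by apply/Rmult_le_compat_r/ratio_max_mono/subset_leq_card/candidates_rcons_sub/pos_INR.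
Qed.

Lemma invariant_rcons_P1 s (i : 'I_n) : val i = size s -> i \in P1 ->
  (forall w, invariant (rcons s w)) -> invariant s.
Proof.
move=> i_s i_P1 inv_rcons; rewrite /invariant -i_s P1_from_ord i_P1 add1n.
set r := P1_from i.+1; set X := candidates s; set B := ratio_max r #|X|.
set T := ext_count s; set N := #|[set f in prefix_class s | f i \in X]|.
have inv_rcons' w : (INR (event_count (rcons s w))
    <= ratio_max r #|candidates (rcons s w)| * INR (ext_count (rcons s w)))%R.
  by have := inv_rcons w; rewrite /invariant size_rcons -i_s.
have event_le : (INR (event_count s) <= B * (INR T - INR N))%R.
  have T_split : T = N + \sum_(w | w \notin X) ext_count (rcons s w).
    by rewrite /T (ext_count_rcons i_s) (bigID (mem X)) /= (ext_count_in _ i_s).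
  have killed : (INR (\sum_(w in X) event_count (rcons s w))
      <= 0 * INR (\sum_(w in X) ext_count (rcons s w)))%R.
    apply: INR_sum_le_scale => w w_X; apply: Rle_trans (inv_rcons' w) _.
    by rewrite candidates_rcons_kill // cards0 ratio_max0; apply: Rle_refl.
  have survived : (INR (\sum_(w | w \notin X) event_count (rcons s w))
      <= B * INR (\sum_(w | w \notin X) ext_count (rcons s w)))%R.
    apply: INR_sum_le_scale => w _; apply: Rle_trans (inv_rcons' w) _.
    by apply/Rmult_le_compat_r/ratio_max_mono/subset_leq_card/candidates_rcons_sub/pos_INR.
  rewrite (event_count_rcons i_s) (bigID (mem X)) /= plus_INR T_split plus_INR.
  by rewrite Rmult_0_l in killed; lra.
have X_n : #|X| <= n by rewrite -[X in _ <= X]card_V max_card.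
have N_ge : (INR #|X| / INR n * INR T <= INR N)%R.
  have := card_value_in_fresh (eq_leq (esym i_s)) (P1_notin_S i_P1)
    (candidates_sub_fresh s).
  move=> /(congr1 INR); rewrite !mult_INR => uniform.
  have fresh_n : (INR #|fresh s| <= INR n)%R.
    by apply/le_INR/leP; rewrite -[X in _ <= X]card_V max_card.
  have n_pos := n_gt0.
  apply: (Rmult_le_reg_r _ _ _ n_pos).
  have -> : (INR #|X| / INR n * INR T * INR n = INR #|X| * INR T)%R by field; lra.
  by rewrite -uniform Rmult_comm; apply: Rmult_le_compat_l => //; apply: pos_INR.
apply: Rle_trans event_le _.
apply: Rle_trans (_ : (1 - INR #|X| / INR n) * B * INR T <= _)%R; last first.
  by apply/Rmult_le_compat_r/ratio_max_succ; [apply: pos_INR|].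
have B_ge0 : (0 <= B)%R := ratio_max_ge0 r #|X|.
have -> : ((1 - INR #|X| / INR n) * B * INR T
          = B * (INR T - INR #|X| / INR n * INR T))%R by ring.
by apply: Rmult_le_compat_l => //; lra.
Qed.

Lemma invariant_prefix k s : size s + k = t1.+1 -> invariant s.
Proof.
elim: k s => [|k IH] s; first by rewrite addn0; apply: invariant_base.
move=> s_k; have s_n : size s < n.
  by apply: leq_trans (ltn_ord t1); rewrite -s_k addnS ltnS leq_addr.
have inv_rcons w : invariant (rcons s w) by apply: IH; rewrite size_rcons addSnnS.
have i_s : val (Ordinal s_n) = size s by [].
by case: (boolP (Ordinal s_n \in P1)) => i_P1;
  [apply: invariant_rcons_P1 i_s i_P1 _ | apply: invariant_rcons_free i_s i_P1 _].
Qed.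

End Invariant.

Theorem mainTheorem5 (beta : R) (V : finType) (e : rel V) (n : nat)
  (P1 S : {set 'I_n}) (l : nat) (t1 p1 p2 : 'I_n) (sigma : 'I_n -> V) :
  (0 < beta < 1)%R ->
  symmetric e -> irreflexive e ->
  #|V| = n ->
  P1 \subset [set i : 'I_n | val i < floorn beta n] ->
  #|P1| = l -> 1 <= l ->
  t1 \in P1 -> (forall i, i \in P1 -> val i <= val t1) ->
  val p1 < val p2 -> val p2 < floorn beta n ->
  p1 \notin P1 -> p2 \notin P1 -> val t1 < val p1 ->
  S \subset [set i : 'I_n | val i < floorn beta n] :\: (P1 :|: [set p2]) ->
  p1 \in S ->
  {in S &, injective sigma} ->
  (INR #|[set f in cond_set S sigma | event e t1 p1 p2 f]|
     <= INR #|cond_set S sigma| / (exp 1 * INR l * (1 - beta)))%R.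
Proof.
move=> beta01 e_sym _ card_V _ card_P1 l_ge1 _ P1_le_t1 p1_p2 p2_fl _ _ t1_p1 S_sub p1_S _.
have fl_R : (INR (floorn beta n) <= beta * INR n)%R by apply: floorn_le; lra.
set fl := floorn beta n in fl_R p2_fl S_sub *.
have fl_n : fl < n by apply: floorn_lt; [lra | apply: leq_ltn_trans (ltn_ord p2)].
have S_in j : j \in S -> [&& val j < fl, j \notin P1 & j != p2].
  by move/(subsetP S_sub); rewrite !inE negb_or => /andP [/andP [-> ->] ->].
have S_fl j : j \in S -> val j < fl by case/S_in/and3P.
have P1_S j : j \in P1 -> j \notin S by apply: contraL => /S_in /and3P [].
have p2_S : p2 \notin S by apply/negP => /S_in /and3P [_ _ /eqP].
have := invariant_prefix sigma e_sym card_V fl_n P1_S p1_S p2_S S_fl P1_le_t1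
  (ltn_trans t1_p1 p1_p2) p2_fl (s := [::]) (erefl (0 + t1.+1)).
rewrite /invariant /ext_count /event_count /= P1_from0 card_P1 prefix_class_nil.
move=> inv; apply: Rle_trans inv _; rewrite Rmult_comm.
apply: Rmult_le_compat_l; first exact: pos_INR.
apply: ratio_max_le_inv_e => //.
by rewrite -[X in _ <= X]card_V max_card.
Qed.
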